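(* Consider the replace-after-random-time process with failure rate $\lambda>0$ and replacement-time density $f$. If there exist $\epsilon>0$ and $\delta>0$ such that $f(r)>\epsilon$ for all $0<r<\delta$, then $E[N(t)]=\infty$ for every $t>0$.
   Context: Let $X_1,X_2,\ldots$ be independent random variables, each exponentially distributed with rate $\lambda>0$ (density $\lambda e^{-\lambda x}$ for $x>0$). Let $R$ be a random variable, independent of $X_1,X_2,\ldots$, with an absolutely continuous distribution on $(0,\infty)$ with probability density function $f$. For $t\ge0$ define $N(t)=\max\{n\ge0:\sum_{k=1}^n\min(X_k,R)\le t\}$; $\{N(t)\}$ is called the replace-after-random-time (RaRT) process. *)

From HB Require Import structures.
From mathcomp Require Import all_boot all_order all_algebra.
From mathcomp Require Import all_classical all_reals all_analysis.
From mathcomp Require Import exponential_distribution.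
Set Implicit Arguments. Unset Strict Implicit. Unset Printing Implicit Defensive.
Import Order.TTheory GRing.Theory Num.Theory.
Import numFieldNormedType.Exports.
Local Open Scope classical_set_scope.
Local Open Scope ring_scope.

Definition mutually_independent {d} {T : measurableType d} {R : realType}
  (P : probability T R) (I : eqType) (Y : I -> T -> R) : Prop :=
  forall (s : seq I) (B : I -> set R), uniq s ->
    (forall i, measurable (B i)) ->
    P (\bigcap_(i in [set j | j \in s]) (Y i @^-1` B i)) =
    (\prod_(i <- s) P (Y i @^-1` B i))%E.

(* The family (R, X_1, X_2, ...) indexed by option nat:
   None |-> R,  Some k |-> X_(k+1). *)
Definition rart_family {T : Type} {R : realType}
  (X : nat -> T -> R) (Rr : T -> R) : option nat -> T -> R :=
  fun o => match o with None => Rr | Some k => X k end.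

(* Partial sums S_n = sum_{k=1}^n min(X_k, R); X is 0-indexed here. *)
Definition rart_sum {T : Type} {R : realType}
  (X : nat -> T -> R) (Rr : T -> R) (n : nat) (w : T) : R :=
  \sum_(k < n) Num.min (X k w) (Rr w).

(* N(t) = max{ n >= 0 : S_n <= t }, as an extended real (supremum, +oo if
   unbounded). *)
Definition rart_N {T : Type} {R : realType}
  (X : nat -> T -> R) (Rr : T -> R) (t : R) (w : T) : \bar R :=
  ereal_sup [set (n%:R)%:E | n in [set n : nat | rart_sum X Rr n w <= t]].

From HB Require Import structures.
From mathcomp Require Import all_boot all_order all_algebra.
From mathcomp Require Import all_classical all_reals all_analysis.
From mathcomp Require Import exponential_distribution.
From mathcomp Require Import lra.
Import Order.TTheory GRing.Theory Num.Theory.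
Import numFieldNormedType.Exports.
Local Open Scope classical_set_scope.
Local Open Scope ring_scope.

(* Only the law of R matters.  Put a := min(t, delta)/2 and
   A_n := {0 < R <= a/(n+1)}.  On A_n the first n+1 inter-renewal times are
   all at most R, so S_(n+1) <= (n+1) R <= a <= t and N(t) >= n+1; hence
   N(t) >= sum_(n < M) 1_(A_n) for every M.  Since f > eps near 0,
   P(A_n) >= eps a/(n+1), so E[N(t)] dominates eps a times every partial sum
   of the harmonic series. *)

(* No measurability is needed: the integral of a nonnegative function is a
   supremum over the simple functions below it. *)
Lemma ge0_le_integralT d (T : measurableType d) (R : realType)
    (mu : {measure set T -> \bar R}) (f g : T -> \bar R) :
  (forall x, (0 <= f x)%E) -> (forall x, (f x <= g x)%E) ->
  (\int[mu]_x f x <= \int[mu]_x g x)%E.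
Proof.
move=> f0 fg; have g0 x := le_trans (f0 x) (fg x).
rewrite !ge0_integralTE //.
by apply: ereal_sup_le => _ [h hf <-]; exists h => // x; exact: le_trans (hf x) (fg x).
Qed.

Lemma harmonic_series_unbounded (R : realType) (K : R) :
  exists M, K < \sum_(n < M) harmonic n.
Proof.
apply/not_existsP => bounded; apply: (@dvg_harmonic R).
apply: nondecreasing_is_cvgn.
  apply/nondecreasing_seqP => n; rewrite /series /= big_nat_recr //=.
  by rewrite lerDl harmonic_ge0.
exists K => _ [M _ <-]; rewrite /series /= big_mkord leNgt.
exact/negP/bounded.
Qed.

Lemma ge_harmonic_eq_infty (R : realType) (c : R) (x : \bar R) :
  0 < c -> (forall M, ((c * \sum_(n < M) harmonic n)%:E <= x)%E) -> x = +oo%E.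
Proof.
move=> c0 xge; apply: eq_infty => r.
have [M ltM] := @harmonic_series_unbounded R (r / c).
apply: le_trans (xge M); rewrite lee_fin -ler_pdivrMl // mulrC ltW //.
Qed.

Section rart_pointwise.
Variables (T : Type) (R : realType) (X : nat -> T -> R) (Rr : T -> R).

Lemma rart_sum_le (n : nat) (w : T) : rart_sum X Rr n w <= n%:R * Rr w.
Proof.
apply: (@le_trans _ _ (\sum_(k < n) Rr w)).
  by apply: ler_sum => k _; rewrite ge_min lexx orbT.
by rewrite sumr_const card_ord mulr_natl.
Qed.

Lemma rart_N_ge (t : R) (n : nat) (w : T) :
  rart_sum X Rr n w <= t -> ((n%:R)%:E <= rart_N X Rr t w)%E.
Proof. by move=> le_t; apply: ereal_sup_ubound; exists n. Qed.

Lemma sum_indic_le_rart_N (t : R) (A : nat -> set T) :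
  0 <= t -> (forall n w, A n w -> n.+1%:R * Rr w <= t) ->
  forall M w, (\sum_(n < M) (\1_(A n) w)%:E <= rart_N X Rr t w)%E.
Proof.
move=> t0 At M w; elim: M => [|M IH].
  by rewrite big_ord0 -[0%E]/((0%:R)%:E); apply: rart_N_ge; rewrite /rart_sum big_ord0.
rewrite big_ord_recr /= indicE.
have [AMw|] := boolP (w \in A M); last by rewrite adde0.
apply: (@le_trans _ _ ((M.+1%:R)%:E)); last first.
  exact/rart_N_ge/(le_trans (rart_sum_le _ _))/At/set_mem.
rewrite -natr1 EFinD leeD // sumEFin lee_fin.
apply: (@le_trans _ _ (\sum_(n < M) (1 : R))); last by rewrite sumr_const card_ord.
by apply: ler_sum => n _; rewrite indicE; case: (_ \in _).
Qed.

End rart_pointwise.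

Lemma density_integral_ge (R : realType) (f : R -> R) (eps b : R) :
  measurable_fun setT f -> 0 <= eps -> 0 < b ->
  (forall r, 0 < r <= b -> eps <= f r) ->
  ((eps * b)%:E <= \int[lebesgue_measure]_(x in `]0%R, b] `&` [set x : R | (0 < x)%R])
                     (f x)%:E)%E.
Proof.
move=> mf eps0 b0 f_ge.
have -> : `]0%R, b] `&` [set x : R | (0 < x)%R] = `]0%R, b]%classic.
  apply/seteqP; split => x /=; first by case.
  by move=> x_in; split => //; move: x_in; rewrite in_itv /= => /andP[].
apply: (@le_trans _ _ (\int[lebesgue_measure]_(x in `]0%R, b]) (cst eps%:E x))%E).
  rewrite integral_cst //.
  have := @lebesgue_measure_itv R `]0%R, b]; rewrite /= lte_fin b0 sube0 => ->.
  by rewrite -EFinM mulrC.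
apply: ge0_le_integral.
- by [].
- by move=> x _; rewrite lee_fin.
- exact: measurable_cst.
- exact/measurable_realfun.measurable_EFinP/measurable_funTS.
- by move=> x; rewrite /= in_itv /= => /andP[x0 xb]; rewrite lee_fin f_ge // x0.
Qed.

Lemma harmonic_le_expectation_rart_N d (T : measurableType d) (R : realType)
    (mu : {measure set T -> \bar R}) (X : nat -> T -> R) (Rr : T -> R)
    (t c : R) (A : nat -> set T) :
  0 <= t -> (forall n, measurable (A n)) ->
  (forall n, ((c * harmonic n)%:E <= mu (A n))%E) ->
  (forall n w, A n w -> n.+1%:R * Rr w <= t) ->
  forall M, ((c * \sum_(n < M) harmonic n)%:E <= \int[mu]_w rart_N X Rr t w)%E.
Proof.
move=> t0 mA muA At M.
apply: (@le_trans _ _ (\int[mu]_w (\sum_(n < M) (\1_(A n) w)%:E))%E); last first.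
  apply: ge0_le_integralT; last exact: sum_indic_le_rart_N.
  by move=> w; apply: sume_ge0 => n _; rewrite lee_fin indicE; case: (_ \in _).
rewrite ge0_integral_sum //; last first.
  by move=> n; exact/measurable_realfun.measurable_EFinP/measurable_realfun.measurable_indic.
rewrite mulr_sumr -sumEFin; apply: lee_sum => n _.
by rewrite integral_indic // setIT.
Qed.

Theorem mainTheorem10 (d : measure_display) (T : measurableType d)
  (R : realType) (P : probability T R)
  (lambda : R) (X : nat -> T -> R) (Rr : T -> R) (f : R -> R) :
  0 < lambda ->
  (forall k, measurable_fun setT (X k)) ->
  (forall k (B : set R), measurable B ->
     P (X k @^-1` B) = exponential_prob lambda B) ->
  measurable_fun setT Rr ->
  measurable_fun setT f ->
  (forall r, 0 < r -> 0 <= f r) ->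
  (forall B : set R, measurable B ->
     P (Rr @^-1` B) =
     (\int[lebesgue_measure]_(x in B `&` [set x : R | (0 < x)%R]) (f x)%:E)%E) ->
  mutually_independent P (rart_family X Rr) ->
  (exists eps delta : R, 0 < eps /\ 0 < delta /\
     forall r, 0 < r < delta -> eps < f r) ->
  forall t : R, 0 < t ->
    (\int[P]_w rart_N X Rr t w = +oo)%E.
Proof.
move=> _ _ _ mRr mf _ lawR _ [eps [delta [eps0 [delta0 f_gt]]]] t t0.
pose a := Num.min t delta / 2.
have a0 : 0 < a by rewrite divr_gt0 // lt_min t0.
have min_t : Num.min t delta <= t by rewrite ge_min lexx.
have min_delta : Num.min t delta <= delta by rewrite ge_min lexx orbT.
have a_t : a <= t by rewrite /a; lra.
have a_delta : a < delta by rewrite /a; lra.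
pose A n := Rr @^-1` (`]0%R, a / n.+1%:R] : set R).
have a_n_le n : a / n.+1%:R <= a.
  by rewrite ler_pdivrMr ?ltr0n // ler_peMr ?ler1n // ltW.
have PA n : ((eps * a * harmonic n)%:E <= P (A n))%E.
  rewrite /A lawR // -mulrA.
  apply: density_integral_ge => //; [exact: ltW|exact: divr_gt0|].
  move=> r /andP[r0 r_le]; apply/ltW/f_gt.
  by rewrite r0 (le_lt_trans r_le) // (le_lt_trans (a_n_le n)).
have A_small n w : A n w -> n.+1%:R * Rr w <= t.
  rewrite /A /= in_itv /= => /andP[_ R_le].
  by apply: (le_trans _ a_t); rewrite mulrC -ler_pdivlMr.
apply: (@ge_harmonic_eq_infty _ (eps * a)); first exact: mulr_gt0.
apply: harmonic_le_expectation_rart_N PA A_small; first exact: ltW.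
by move=> n; rewrite -[A n]setTI; exact: mRr.
Qed.
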